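(* Let $n\ge 2$ and $r>2$ be integers, and let $u,v$ be vertices of $G(n,r)$ with graph distance $d_{G(n,r)}(u,v)\le 2$. Then the number of moves $b\in\mathcal{B}$ such that both $u+b$ and $v+b$ have all entries non-negative (i.e. $b$ is a valid move from both $u$ and $v$) is at least $\binom{n}{2}$.
   Context: For integers $n,r\ge 1$, $G(n,r)$ is the simple undirected graph whose vertices are the $n\times n$ matrices with non-negative integer entries all of whose row sums and column sums equal $r$. Let $e_{ij}$ be the $n\times n$ matrix with a $1$ in position $(i,j)$ and $0$ elsewhere, and let $\mathcal{B}=\{\pm(e_{ij}+e_{kl}-e_{il}-e_{kj}) : 1\le i<k\le n,\ 1\le j<l\le n\}$ (the Markov moves). Two vertices $u,v$ are adjacent iff $u-v\in\mathcal{B}$; distance is the usual shortest-path distance in this graph. *)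

From HB Require Import structures.
From mathcomp Require Import all_boot all_order all_algebra.
Set Implicit Arguments. Unset Strict Implicit. Unset Printing Implicit Defensive.
Import Order.TTheory GRing.Theory Num.Theory.
Local Open Scope ring_scope.

Definition nonneg_mx (n : nat) (A : 'M[int]_n) : Prop :=
  forall i j, 0 <= A i j.

Definition is_vertex (n r : nat) (A : 'M[int]_n) : Prop :=
  nonneg_mx A /\
  (forall i, \sum_(j < n) A i j = (r%:Z)) /\
  (forall j, \sum_(i < n) A i j = (r%:Z)).

Definition move_mx (n : nat) (i j k l : 'I_n) : 'M[int]_n :=
  delta_mx i j + delta_mx k l - delta_mx i l - delta_mx k j.

Definition move_of (n : nat) (t : 'I_n * 'I_n * 'I_n * 'I_n * bool) : 'M[int]_n :=
  let: (i, j, k, l, s) := t in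
  if s then move_mx i j k l else - move_mx i j k l.

Definition move_index_ok (n : nat) (t : 'I_n * 'I_n * 'I_n * 'I_n * bool) : bool :=
  let: (i, j, k, l, _) := t in (i < k)%N && (j < l)%N.

Definition is_move (n : nat) (b : 'M[int]_n) : Prop :=
  exists t, move_index_ok t /\ b = move_of t.

Definition adjacent (n r : nat) (u v : 'M[int]_n) : Prop :=
  is_vertex r u /\ is_vertex r v /\ is_move (u - v).

Fixpoint within (n r k : nat) (u v : 'M[int]_n) : Prop :=
  match k with
  | O => u = v
  | S k' => u = v \/ exists w, adjacent r u w /\ within r k' w v
  end.

Definition validb (n : nat) (u b : 'M[int]_n) : bool :=
  [forall i, forall j, 0 <= (u + b) i j].

Definition common_moves (n : nat) (u v : 'M[int]_n) : nat :=
  size (undup [seq move_of t | t <- enum [pred t : 'I_n * 'I_n * 'I_n * 'I_n * bool |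
                 move_index_ok t && validb u (move_of t) && validb v (move_of t)]]).

(* Call a cell (i, j) a common support cell when u i j > 0 and v i j > 0.
   1. Combinatorics (section IndependentPairs): for a relation E on 'I_n with
      no empty row and no empty column, there are at least n(n-1) ordered
      "independent" pairs of E-cells ((i,j),(k,l)) with i != k and j != l:
      each row i starts at least n-1 of them.  Hence at least 'C(n, 2) such
      pairs have i < k.
   2. Every row and column of u, v contains a common support cell: u - v is a
      sum of at most two moves, and a move has l1-norm at most 2 on each row
      and column; a row without common support cell would give
      2r = sum (u + v) <= sum |u - v| <= 4, contradicting r > 2.
   3. An independent pair p, q of common support cells yields the move
      cross_move p q (remove a unit at p and q, add one at the two crossing
      cells), valid from both u and v; distinct pairs with i < k yield
      distinct moves, because the -1 entries of cross_move p q are exactly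
      p and q. *)

From HB Require Import structures.
From mathcomp Require Import all_boot all_order all_algebra.
From mathcomp Require Import zify.
Import Order.TTheory GRing.Theory Num.Theory.
Set Implicit Arguments. Unset Strict Implicit. Unset Printing Implicit Defensive.

Section IndependentPairs.

Variables (n : nat) (E : rel 'I_n) (col row : 'I_n -> 'I_n).
Hypothesis E_col : forall i, E i (col i).
Hypothesis E_row : forall j, E (row j) j.

Definition indep_pairs : {set ('I_n * 'I_n) * ('I_n * 'I_n)} :=
  [set pq | [&& E pq.1.1 pq.1.2, E pq.2.1 pq.2.2,
                pq.1.1 != pq.2.1 & pq.1.2 != pq.2.2]].

(* Each row i is the first row of at least n-1 independent pairs: if row i
   has a second cell j2 besides col i, pair a cell of row i with (k, col k)
   for every row k != i; otherwise pair (i, col i) with (row l, l) for every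
   column l != col i. *)
Lemma indep_pairs_from_row i :
  n.-1 <= #|[set pq in indep_pairs | pq.1.1 == i]|.
Proof.
have card_inj (f : 'I_n -> ('I_n * 'I_n) * ('I_n * 'I_n)) (x : 'I_n) : injective f ->
    (forall y, y != x -> f y \in [set pq in indep_pairs | pq.1.1 == i]) ->
    n.-1 <= #|[set pq in indep_pairs | pq.1.1 == i]|.
  move=> f_inj f_in; rewrite -[n in n.-1]card_ord -(cardsC1 x) -(card_imset _ f_inj).
  apply/subset_leq_card/subsetP => pq /imsetP [y y_new ->].
  by apply: f_in; rewrite !inE in y_new.
have [/existsP [j2 /andP [E_ij2 j2_new]] | single] :=
  boolP [exists j, E i j && (j != col i)].
- pose f k := ((i, if col k != col i then col i else j2), (k, col k)).
  apply: (card_inj f i) => [k k' [] //| k k_new].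
  rewrite !inE /= eqxx andbT E_col [i == k]eq_sym k_new /=.
  case: ifP => [col_k | /negbFE /eqP ->]; first by rewrite E_col eq_sym col_k.
  by rewrite E_ij2.
- pose f l := ((i, col i), (row l, l)).
  apply: (card_inj f (col i)) => [l l' /(congr1 (fun pq => pq.2.2)) //| l l_new].
  rewrite !inE /= eqxx E_col E_row [col i == l]eq_sym l_new !andbT /=.
  apply/eqP => row_i; move/existsPn/(_ l): single.
  by rewrite {1}row_i E_row l_new.
Qed.

Lemma card_indep_pairs : n * n.-1 <= #|indep_pairs|.
Proof.
rewrite -sum1_card (partition_big (fun pq => pq.1.1) xpredT) //=.
rewrite -[n in n * _]card_ord -sum_nat_const; apply: leq_sum => i _.
apply: leq_trans (indep_pairs_from_row i) _; rewrite -sum1_card.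
by apply/eq_leq/eq_bigl => pq; rewrite !inE.
Qed.

(* Pairs (p, q) and (q, p) encode the same unordered pair; we keep the one
   whose first row is smaller. *)
Definition indep_pairs_lt := [set pq in indep_pairs | pq.1.1 < pq.2.1].

(* Swapping the two cells shows that at least half of the independent pairs
   have a smaller first row. *)
Lemma card_indep_pairs_lt : 'C(n, 2) <= #|indep_pairs_lt|.
Proof.
pose swap (pq : ('I_n * 'I_n) * ('I_n * 'I_n)) := (pq.2, pq.1).
have swap_inj : injective swap by move=> [p q] [p' q'] [-> ->].
have cover : indep_pairs \subset indep_pairs_lt :|: swap @: indep_pairs_lt.
  apply/subsetP => -[p q] pq_indep; rewrite in_setU.
  move: (pq_indep); rewrite inE /= => /and4P [E_p E_q p_q1 p_q2].
  case: (ltngtP p.1 q.1) => [lt_pq | lt_qp | /val_inj eq_pq].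
  - by rewrite inE pq_indep lt_pq.
  - apply/orP; right; apply/imsetP; exists (q, p) => //.
    by rewrite !inE /= E_p E_q lt_qp eq_sym p_q1 eq_sym p_q2.
  - by rewrite eq_pq eqxx in p_q1.
have := subset_leq_card cover; rewrite cardsU card_imset // bin2 -divn2.
have := card_indep_pairs.
by move: (n * n.-1) #|indep_pairs| #|indep_pairs_lt| #|_ :&: _| => m a b c; lia.
Qed.

End IndependentPairs.

Local Open Scope ring_scope.

Definition cross_move n (p q : 'I_n * 'I_n) : 'M[int]_n :=
  delta_mx p.1 q.2 + delta_mx q.1 p.2 - delta_mx p.1 p.2 - delta_mx q.1 q.2.

Lemma cross_moveE n (p q : 'I_n * 'I_n) a c :
  cross_move p q a c =
    ((a == p.1) && (c == q.2))%:R + ((a == q.1) && (c == p.2))%:R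
  - ((a == p.1) && (c == p.2))%:R - ((a == q.1) && (c == q.2))%:R.
Proof. by rewrite !mxE. Qed.

Lemma cross_move_ge n (p q : 'I_n * 'I_n) a c :
  p.1 != q.1 -> -1 <= cross_move p q a c.
Proof.
case: p q => [i j] [k l] /= ik; rewrite cross_moveE /=.
have : ~~ ((a == i) && (a == k)) by apply: contra ik => /andP [/eqP <- /eqP <-].
by case: (a == i) (a == k) (c == j) (c == l) => [] [] [] [].
Qed.

Lemma cross_move_eqN1 n (p q : 'I_n * 'I_n) a c :
  p.1 != q.1 -> p.2 != q.2 ->
  (cross_move p q a c == -1) = ((a, c) == p) || ((a, c) == q).
Proof.
case: p q => [i j] [k l] /= ik jl; rewrite cross_moveE /= !xpair_eqE.
have : ~~ ((a == i) && (a == k)) by apply: contra ik => /andP [/eqP <- /eqP <-].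
have : ~~ ((c == j) && (c == l)) by apply: contra jl => /andP [/eqP <- /eqP <-].
by case: (a == i) (a == k) (c == j) (c == l) => [] [] [] [].
Qed.

Lemma cross_move_is_move n (p q : 'I_n * 'I_n) :
  (p.1 < q.1)%N -> p.2 != q.2 -> is_move (cross_move p q).
Proof.
move=> lt_pq1 ne_pq2; case: (ltngtP p.2 q.2) => [lt_pq2 | lt_qp2 | /val_inj eq_pq2].
- exists (p.1, p.2, q.1, q.2, false); split; first exact/andP.
  by apply/matrixP => a c; rewrite !mxE; lia.
- exists (p.1, q.2, q.1, p.2, true); split; first exact/andP.
  by apply/matrixP => a c; rewrite !mxE; lia.
- by rewrite eq_pq2 eqxx in ne_pq2.
Qed.


Lemma move_is_cross n (b : 'M[int]_n) : is_move b ->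
  exists p q : 'I_n * 'I_n, [/\ p.1 != q.1, p.2 != q.2 & b = cross_move p q].
Proof.
case=> -[[[[i j] k] l] []] [/andP [lt_ik lt_jl] ->] /=.
- by exists (i, l), (k, j); rewrite /= !neq_ltn lt_ik lt_jl orbT.
- exists (i, j), (k, l); rewrite /= !neq_ltn lt_ik lt_jl; split=> //.
  apply/matrixP => a c; rewrite !mxE /=.
  by case: (a == i) (a == k) (c == j) (c == l) => [] [] [] [].
Qed.

Definition common_support n (u v : 'M[int]_n) : rel 'I_n :=
  fun i j => (0 < u i j) && (0 < v i j).

Definition l1_bounded n (b : 'M[int]_n) : Prop :=
  (forall a, \sum_c `|b a c| <= 2) /\ (forall c, \sum_a `|b a c| <= 2).

Lemma sum_indicator n (j : 'I_n) : \sum_(c < n) ((c == j)%:R : int) = 1.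
Proof. by rewrite (bigD1 j) //= eqxx big1 ?addr0 // => c /negbTE ->. Qed.

(* Entrywise bound by a product of a row weight and a column weight; each
   weight sums to 2 over 'I_n and is at most 1 when p, q are independent. *)
Lemma cross_move_abs n (p q : 'I_n * 'I_n) a c :
  `|cross_move p q a c| <=
    ((a == p.1)%:R + (a == q.1)%:R) * ((c == p.2)%:R + (c == q.2)%:R).
Proof.
by rewrite cross_moveE; case: (a == p.1) (a == q.1) (c == p.2) (c == q.2) => [] [] [] [].
Qed.

Lemma cross_move_l1_bounded n (p q : 'I_n * 'I_n) :
  p.1 != q.1 -> p.2 != q.2 -> l1_bounded (cross_move p q).
Proof.
have at_most_one (x y z : 'I_n) : x != y -> (z == x)%:R + (z == y)%:R <= 1 :> int.
  by case: (z =P x) => [-> /negbTE -> | _] //; case: (z == y).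
move=> ne1 ne2; split=> [a | c].
- apply: le_trans (ler_sum _ (fun c _ => cross_move_abs p q a c)) _.
  rewrite -mulr_sumr big_split /= !sum_indicator.
  by have := at_most_one _ _ a ne1; lia.
- apply: le_trans (ler_sum _ (fun a _ => cross_move_abs p q a c)) _.
  rewrite -mulr_suml big_split /= !sum_indicator.
  by have := at_most_one _ _ c ne2; lia.
Qed.

Lemma move_l1_bounded n (b : 'M[int]_n) : is_move b -> l1_bounded b.
Proof. by case/move_is_cross => p [q [ne1 ne2 ->]]; exact: cross_move_l1_bounded. Qed.

Lemma l1_bounded0 n : l1_bounded (0 : 'M[int]_n).
Proof. by split=> ?; rewrite big1 // => ? _; rewrite mxE normr0. Qed.

Lemma within2_split n r (u v : 'M[int]_n) : within r 2 u v ->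
  exists b1 b2, [/\ l1_bounded b1, l1_bounded b2 & u - v = b1 + b2].
Proof.
case=> [-> | [w [[_ [_ move_uw]] [<- | [w' [[_ [_ move_ww']] /= <-]]]]]].
- by exists 0, 0; rewrite subrr addr0; split=> //; exact: l1_bounded0.
- by exists (u - w), 0; rewrite addr0; split=> //; [exact: move_l1_bounded | exact: l1_bounded0].
- exists (u - w), (w - w'); split; [exact: move_l1_bounded.. |].
  by rewrite addrA subrK.
Qed.

(* Two non-negative vectors of total mass r > 2 whose difference is a sum of
   two vectors of l1-norm at most 2 share a positive coordinate: otherwise
   f c + g c = |f c - g c| for all c, and summing gives 2r <= 4. *)
Lemma common_positive_coord m r (f g h1 h2 : 'I_m -> int) :
  (2 < r)%N -> (forall c, 0 <= f c) -> (forall c, 0 <= g c) ->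
  \sum_c f c = r%:Z -> \sum_c g c = r%:Z -> (forall c, f c - g c = h1 c + h2 c) ->
  \sum_c `|h1 c| <= 2 -> \sum_c `|h2 c| <= 2 ->
  exists c, (0 < f c) && (0 < g c).
Proof.
move=> r_gt2 f_ge0 g_ge0 sum_f sum_g diff_fg h1_small h2_small.
have [/existsP // | ] := boolP [exists c, (0 < f c) && (0 < g c)].
rewrite negb_exists => /forallP disjoint; exfalso.
have pointwise c : f c + g c <= `|h1 c| + `|h2 c|.
  have := ler_normD (h1 c) (h2 c); rewrite -diff_fg.
  by move: (disjoint c) (f_ge0 c) (g_ge0 c); lia.
have : \sum_c (f c + g c) <= \sum_c (`|h1 c| + `|h2 c|).
  by apply: ler_sum => c _; exact: pointwise.
rewrite !big_split /= sum_f sum_g; move: h1_small h2_small r_gt2.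
by move: (\sum_c `|h1 c|) (\sum_c `|h2 c|) => x y; lia.
Qed.

Lemma common_support_full n r (u v : 'M[int]_n) : (2 < r)%N ->
  is_vertex r u -> is_vertex r v -> within r 2 u v ->
  (forall i, exists j, common_support u v i j) /\
  (forall j, exists i, common_support u v i j).
Proof.
move=> r_gt2 [u_ge0 [u_rows u_cols]] [v_ge0 [v_rows v_cols]].
case/within2_split => b1 [b2 [[b1_rows b1_cols] [b2_rows b2_cols] uv_split]].
have diff a c : u a c - v a c = b1 a c + b2 a c.
  by have := congr1 (fun M : 'M[int]_n => M a c) uv_split; rewrite !mxE.
split=> [a | c].
- exact: common_positive_coord r_gt2 (u_ge0 a) (v_ge0 a) (u_rows a) (v_rows a)
           (diff a) (b1_rows a) (b2_rows a).
- exact: common_positive_coord r_gt2 (u_ge0^~ c) (v_ge0^~ c) (u_cols c) (v_cols c)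
           (diff^~ c) (b1_cols c) (b2_cols c).
Qed.

Lemma cross_move_valid n (u : 'M[int]_n) (p q : 'I_n * 'I_n) :
  nonneg_mx u -> p.1 != q.1 -> p.2 != q.2 ->
  0 < u p.1 p.2 -> 0 < u q.1 q.2 -> validb u (cross_move p q).
Proof.
move=> u_ge0 ne1 ne2 u_p u_q; apply/forallP => a; apply/forallP => c; rewrite mxE.
have [/eqP N_a | N_a] := boolP (cross_move p q a c == -1); last first.
  have := cross_move_ge a c ne1; rewrite le_eqVlt eq_sym (negbTE N_a) /=.
  by have := u_ge0 a c; lia.
rewrite N_a; move: N_a => /eqP; rewrite cross_move_eqN1 //.
by case/orP => /eqP cell; [move: u_p | move: u_q]; rewrite -cell /=; lia.
Qed.

Lemma cross_move_inj n (E : rel 'I_n) :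
  {in indep_pairs_lt E &, injective (fun pq => cross_move pq.1 pq.2)}.
Proof.
move=> [p q] [p' q']; rewrite !inE /=.
move=> /andP [/and4P [_ _ ne1 ne2] lt_pq] /andP [/and4P [_ _ ne1' ne2'] lt_pq'] eq_N.
have same_cells x : ((x == p) || (x == q)) = ((x == p') || (x == q')).
  by case: x => a c; rewrite -!cross_move_eqN1 // eq_N.
have : (p' == p) || (p' == q) by rewrite same_cells eqxx.
have : (q' == p) || (q' == q) by rewrite same_cells eqxx orbT.
have : (p == p') || (p == q') by rewrite -same_cells eqxx.
by do 3 case/orP => /eqP ?; subst => //; move: lt_pq lt_pq'; lia.
Qed.

Lemma common_moves_ge n (u v : 'M[int]_n) : nonneg_mx u -> nonneg_mx v ->
  (#|indep_pairs_lt (common_support u v)| <= common_moves u v)%N.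
Proof.
move=> u_ge0 v_ge0.
rewrite /common_moves cardE -(size_map (fun pq => cross_move pq.1 pq.2)).
apply: uniq_leq_size.
  by rewrite map_inj_in_uniq ?enum_uniq // => x y; rewrite !mem_enum; exact: cross_move_inj.
move=> N /mapP [[p q]]; rewrite mem_enum !inE /= => /andP [pq_indep lt_pq] ->{N}.
case/and4P: pq_indep => /andP [u_p v_p] /andP [u_q v_q] ne1 ne2.
have [t [t_ok t_eq]] := cross_move_is_move lt_pq ne2.
rewrite t_eq mem_undup; apply: map_f; rewrite mem_enum inE t_ok -t_eq.
by rewrite !cross_move_valid.
Qed.

Local Close Scope ring_scope.

Theorem lemma2p4 (n r : nat) (u v : 'M[int]_n) :
  (2 <= n)%N -> (2 < r)%N ->
  is_vertex r u -> is_vertex r v ->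
  within r 2 u v ->
  ('C(n, 2) <= common_moves u v)%N.
Proof.
move=> _ r_gt2 u_vertex v_vertex uv_close.
have [rows_full cols_full] := common_support_full r_gt2 u_vertex v_vertex uv_close.
have [col E_col] := fin_all_exists rows_full.
have [row E_row] := fin_all_exists cols_full.
apply: leq_trans (card_indep_pairs_lt E_col E_row) _.
by apply: common_moves_ge; [case: u_vertex | case: v_vertex].
Qed.
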